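(* Let $p,q$ be integers with $p\equiv 2\pmod 4$ and $q\equiv 3\pmod 4$, and let $(u_n)_{n\ge0}$ be defined by $u_0=0$, $u_1=1$ and $u_{n+2}=pu_{n+1}+qu_n$ for all $n\ge0$. Then for all integers $n\ge0$ and $k\ge1$, $$u_{n+2^k}\equiv u_n+2^k\pmod{2^{k+1}}.$$ *)

From Stdlib Require Import ZArith.
Open Scope Z_scope.

Fixpoint lucas_pair (p q : Z) (n : nat) : Z * Z :=
  match n with
  | O => (0, 1)
  | S m => let (a, b) := lucas_pair p q m in (b, p * b + q * a)
  end.

Definition u (p q : Z) (n : nat) : Z := fst (lucas_pair p q n).

(* Write M = 2^k.  The addition formula u_(m+n+1) = u_(m+1) u_(n+1) + q u_m u_n
   gives u_(2M) = u_M (2 u_(M+1) - p u_M) and u_(2M+1) = u_(M+1)^2 + q u_M^2, and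
   with p = 2 mod 4, q = 3 mod 4 these show by induction on k that
   u_M = M and u_(M+1) = M + 1 modulo 2M.  The difference u_(n+M) - u_n - M then
   satisfies the recurrence of u up to the error term (p + q - 1) M, which is
   divisible by 4M, so it stays divisible by 2M for all n. *)

From Stdlib Require Import ZArith Lia.
Open Scope Z_scope.

Section LucasSequence.

Variables p q : Z.

Notation u := (u p q).

Lemma u_succ n : u (S n) = snd (lucas_pair p q n).
Proof. unfold u; simpl; destruct (lucas_pair p q n); reflexivity. Qed.

Lemma u_succ_succ n : u (S (S n)) = p * u (S n) + q * u n.
Proof. rewrite !u_succ; unfold u; simpl; destruct (lucas_pair p q n); reflexivity. Qed.

Lemma u_add m n : u (m + n + 1) = u (m + 1) * u (n + 1) + q * u m * u n.
Proof.
  revert n; induction m as [|m IH]; intros n.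
  - change (u 0) with 0; change (u (0 + 1)) with 1; rewrite Nat.add_0_l; ring.
  - replace (S m + n + 1)%nat with (m + S n + 1)%nat by lia.
    rewrite IH, !Nat.add_1_r, !u_succ_succ; ring.
Qed.

Lemma u_double M : u (M + M) = u M * (2 * u (M + 1) - p * u M).
Proof.
  destruct M as [|M]; [reflexivity|].
  replace (S M + S M)%nat with (M + S M + 1)%nat by lia.
  rewrite u_add, !Nat.add_1_r, u_succ_succ; ring.
Qed.

Lemma u_double_succ M : u (M + M + 1) = u (M + 1) ^ 2 + q * u M ^ 2.
Proof. rewrite u_add; ring. Qed.

Lemma u_shift_congr (m c : Z) (M : nat) :
  (m | (p + q - 1) * c) ->
  (m | u M - c) -> (m | u (M + 1) - (1 + c)) ->
  forall n, (m | u (n + M) - (u n + c)).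
Proof.
  intros Herr H0 H1.
  enough (H : forall n, (m | u (n + M) - (u n + c)) /\
                        (m | u (S n + M) - (u (S n) + c))) by apply H.
  induction n as [|n [Hn HSn]].
  - split; [exact H0|]. rewrite Nat.add_comm; exact H1.
  - split; [exact HSn|].
    replace (S (S n) + M)%nat with (S (S (n + M))) by lia.
    rewrite !u_succ_succ.
    replace (S (n + M)) with (S n + M)%nat by lia.
    replace (p * u (S n + M) + q * u (n + M) - (p * u (S n) + q * u n + c))
      with (p * (u (S n + M) - (u (S n) + c)) + q * (u (n + M) - (u n + c))
            + (p + q - 1) * c) by ring.
    apply Z.divide_add_r; [apply Z.divide_add_r|]; auto using Z.divide_mul_r.
Qed.

Definition u_congr_at (M : nat) : Prop :=
  (2 * Z.of_nat M | u M - Z.of_nat M) /\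
  (2 * Z.of_nat M | u (M + 1) - (Z.of_nat M + 1)).

Hypothesis hp : p mod 4 = 2.
Hypothesis hq : q mod 4 = 3.

Lemma u_congr_at_double M : u_congr_at M -> u_congr_at (M + M).
Proof.
  intros [[a Ha] [b Hb]].
  set (N := Z.of_nat M) in *.
  unfold u_congr_at; replace (Z.of_nat (M + M)) with (2 * N) by (unfold N; lia).
  assert (Hp : p = 2 + 4 * (p / 4)) by (pose proof (Z.div_mod p 4); lia).
  assert (Hq : q = 3 + 4 * (q / 4)) by (pose proof (Z.div_mod q 4); lia).
  set (s := p / 4) in Hp; set (t := q / 4) in Hq.
  assert (HuM : u M = N + 2 * N * a) by lia.
  assert (HuM1 : u (M + 1) = N + 1 + 2 * N * b) by lia.
  split.
  - rewrite u_double, HuM, HuM1.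
    exists (a + N * (1 + 2 * a) * (b - s - a - 2 * s * a)). rewrite Hp; ring.
  - rewrite u_double_succ, HuM, HuM1.
    exists (N * (1 + t) + b * (N + 1) + N * b ^ 2 + q * N * (a + a ^ 2)).
    rewrite Hq; ring.
Qed.

Lemma u_congr_at_pow2 k : u_congr_at (2 ^ k).
Proof.
  induction k as [|k IH].
  - split; [exists 0; reflexivity|].
    change (u (2 ^ 0 + 1)) with (p * 1 + q * 0).
    exists (2 * (p / 4)); pose proof (Z.div_mod p 4); change (Z.of_nat (2 ^ 0)) with 1; lia.
  - replace (2 ^ S k)%nat with (2 ^ k + 2 ^ k)%nat by (simpl; lia).
    now apply u_congr_at_double.
Qed.

End LucasSequence.

Theorem mainTheorem8 (p q : Z) (hp : p mod 4 = 2) (hq : q mod 4 = 3)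
  (n k : nat) (hk : (1 <= k)%nat) :
  (u p q (n + 2 ^ k)%nat - (u p q n + 2 ^ Z.of_nat k)) mod 2 ^ (Z.of_nat k + 1) = 0.
Proof.
  set (M := (2 ^ k)%nat).
  assert (HM : Z.of_nat M = 2 ^ Z.of_nat k) by apply Nat2Z.inj_pow.
  destruct (u_congr_at_pow2 p q hp hq k) as [H0 H1]; fold M in H0, H1.
  rewrite Z.pow_add_r, Z.pow_1_r, <- HM by lia.
  apply Z.mod_divide; [lia|].
  assert (Herr : (2 * Z.of_nat M | (p + q - 1) * Z.of_nat M)).
  { exists (2 * (p / 4 + q / 4 + 1)).
    pose proof (Z.div_mod p 4); pose proof (Z.div_mod q 4); lia. }
  rewrite Z.mul_comm.
  apply (u_shift_congr p q _ _ M Herr H0); now rewrite Z.add_comm.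
Qed.
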